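(* Let $d$ be odd and let $H$ be a dephased $d\times d$ complex Hadamard matrix. There is no nonzero real $d\times d$ matrix $R$ with zero first row and zero first column whose nonzero entries all lie in only two columns (or all lie in only two rows) such that $H\circ\exp(i\xi R)$ is a complex Hadamard matrix for every $\xi\in\mathbb{R}$. In other words, in an affine family of complex Hadamard matrices of odd order, no parameter can appear in only two columns or only two rows.
   Context: A $d\times d$ complex Hadamard matrix has unimodular entries and pairwise orthogonal columns; it is dephased if its first row and first column consist of $1$'s. $\circ$ denotes the entrywise product and $\exp(i\xi R)$ the entrywise exponential $(\exp(i\xi R))_{jk}=e^{i\xi R_{jk}}$. An affine family stemming from a dephased $H$ is a set $\{H\circ\exp(i\sum_k\xi_kR_k)\}$ with real matrices $R_k$ having zero first row and column. *)

From HB Require Import structures.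
From mathcomp Require Import all_boot all_order all_algebra.
From mathcomp Require Import complex.
From mathcomp Require Import Rstruct.
From Stdlib Require Import Reals.
Set Implicit Arguments. Unset Strict Implicit. Unset Printing Implicit Defensive.
Import Order.TTheory GRing.Theory Num.Theory.
Local Open Scope ring_scope.
Import ComplexField.

Notation CC := (complex R).

Definition expi (t : R) : CC := (Rtrigo_def.cos t +i* Rtrigo_def.sin t)%C.

Definition is_complex_hadamard (d : nat) (H : 'M[CC]_d) : Prop :=
  (forall i j, `|H i j| = 1) /\
  (forall j k : 'I_d, j != k -> \sum_(i < d) H i j * (H i k)^* = 0).

Definition dephased (n : nat) (H : 'M[CC]_n.+1) : Prop :=
  (forall j, H ord0 j = 1) /\ (forall i, H i ord0 = 1).

Definition affine_member (d : nat) (H : 'M[CC]_d) (Rm : 'M[R]_d) (xi : R)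
  : 'M[CC]_d := \matrix_(i, j) (H i j * expi (xi * Rm i j)).

Definition zero_first_row_col (n : nat) (Rm : 'M[R]_n.+1) : Prop :=
  (forall j, Rm ord0 j = 0) /\ (forall i, Rm i ord0 = 0).

Definition support_in_two_columns (d : nat) (Rm : 'M[R]_d) : Prop :=
  exists j1 j2 : 'I_d, forall i j, Rm i j != 0 -> j = j1 \/ j = j2.

Definition support_in_two_rows (d : nat) (Rm : 'M[R]_d) : Prop :=
  exists i1 i2 : 'I_d, forall i j, Rm i j != 0 -> i = i1 \/ i = i2.

From mathcomp Require Import all_boot all_order all_algebra complex Rstruct.
From Stdlib Require Import Reals Lra.
From mathcomp Require Import lra ring.
Set Implicit Arguments. Unset Strict Implicit. Unset Printing Implicit Defensive.
Import Order.TTheory GRing.Theory Num.Theory ComplexField.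
Local Open Scope ring_scope.

(* Suppose only the columns j and j' of R are nonzero, and put p_i = e^{i xi R_ij}.
   The untouched columns of H o exp(i xi R) are orthogonal to the phased column
   u_i = H_ij p_i, and the columns of H are an orthogonal basis, so u lies in the
   span of the columns j and j' of H; taking moduli, |d p_i - S| does not depend
   on i, where S = sum_l p_l.  For xi small every Re p_i is positive, and this
   equidistance forces Re (p_i S^* ) = Re S and Im (p_i S^* ) = +-tau with
   sum_i Im (p_i S^* ) = 0.  An odd number of signs +-tau cannot cancel unless
   tau = 0, whence every p_i is real and R_ij = 0.  Rows reduce to columns by
   transposition, since H^T is again a complex Hadamard matrix. *)

Lemma mul_conj_norm1 (z : CC) : `|z| = 1 -> z * z^* = 1.
Proof. by move=> z1; rewrite -normCK z1 expr1n. Qed.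

Lemma hadamard_rows_orthogonal n (H : 'M[CC]_n.+1) : is_complex_hadamard H ->
  forall i l, \sum_k H i k * (H l k)^* = (i == l)%:R * n.+1%:R.
Proof.
move=> [hu ho].
(* The columns are orthogonal, so H^* / d is a left, hence right, inverse of H. *)
pose A : 'M[CC]_n.+1 := \matrix_(k, l) ((H l k)^* / n.+1%:R).
have d_neq0 : (n.+1%:R : CC) != 0 by rewrite pnatr_eq0.
have AH : A *m H = 1%:M.
  apply/matrixP => k k'; rewrite !mxE.
  case: (eqVneq k k') => [<-|nkk'].
    under eq_bigr => l _ do rewrite mxE mulrAC [_^* * _]mulrC mul_conj_norm1 // mul1r.
    by rewrite sumr_const card_ord -(mulr_natr (_^-1)) mulVf.
  rewrite (eq_bigr (fun l => H l k' * (H l k)^* / n.+1%:R)); last first.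
    by move=> l _; rewrite mxE mulrAC [_^* * _]mulrC.
  by rewrite -mulr_suml ho 1?eq_sym // mul0r.
move=> i l; have /matrixP/(_ i l) := mulmx1C AH; rewrite !mxE => <-.
by rewrite mulr_suml; apply: eq_bigr => k _; rewrite mxE mulrA divfK.
Qed.

Lemma trmx_hadamard n (M : 'M[CC]_n.+1) :
  is_complex_hadamard M -> is_complex_hadamard M^T.
Proof.
move=> hM; have [hu _] := hM; split=> [i j|j k njk]; first by rewrite mxE hu.
under eq_bigr => i _ do rewrite !mxE.
by rewrite hadamard_rows_orthogonal // (negbTE njk) mul0r.
Qed.

Lemma affine_member_trmx n (H : 'M[CC]_n) (Rm : 'M[R]_n) xi :
  affine_member H^T Rm^T xi = (affine_member H Rm xi)^T.
Proof. by apply/matrixP => i j; rewrite !mxE. Qed.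

Lemma hadamard_column_expansion n (H : 'M[CC]_n.+1) (u : 'I_n.+1 -> CC) i :
  is_complex_hadamard H ->
  n.+1%:R * u i = \sum_k H i k * \sum_l u l * (H l k)^*.
Proof.
move=> hH.
under eq_bigr => k _ do rewrite mulr_sumr.
under eq_bigr => k _ do under eq_bigr => l _ do
  rewrite mulrCA [u l * _]mulrC.
rewrite exchange_big /= (bigD1 i) //= -mulr_suml hadamard_rows_orthogonal //.
rewrite eqxx mul1r big1 ?addr0 1?mulrC // => l nli.
by rewrite -mulr_suml hadamard_rows_orthogonal // eq_sym (negbTE nli) !mul0r.
Qed.

Lemma phased_column_equidistant n (H : 'M[CC]_n.+1) (p : 'I_n.+1 -> CC)
    (j j' : 'I_n.+1) :
  is_complex_hadamard H -> j != j' ->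
  (forall k, k != j -> k != j' -> \sum_l H l j * p l * (H l k)^* = 0) ->
  forall i i', `|n.+1%:R * p i - \sum_l p l| = `|n.+1%:R * p i' - \sum_l p l|.
Proof.
move=> hH njj' orth; have [hu _] := hH.
have nj'j : j' != j by rewrite eq_sym.
pose B := \sum_l H l j * p l * (H l j')^*.
have coord_j : \sum_l H l j * p l * (H l j)^* = \sum_l p l.
  by apply: eq_bigr => l _; rewrite mulrAC mul_conj_norm1 // mul1r.
have span i : n.+1%:R * (H i j * p i) = H i j * \sum_l p l + H i j' * B.
  rewrite (hadamard_column_expansion (fun l => H l j * p l) i hH).
  rewrite (bigD1 j) //= (bigD1 j' nj'j) /= coord_j [X in _ + (_ + X)]big1 ?addr0 //.
  by move=> k /andP [nkj nkj']; rewrite orth // mulr0.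
have dist i : `|n.+1%:R * p i - \sum_l p l| = `|B|.
  have e : H i j * (n.+1%:R * p i - \sum_l p l) = H i j' * B.
    by rewrite mulrBr mulrCA span addrC addKr.
  by have := congr1 Num.norm e; rewrite !normrM !hu !mul1r.
by move=> i i'; rewrite !dist.
Qed.

Lemma odd_sum_signs_eq0 m (t : 'I_m.+1 -> R) : odd m.+1 ->
  (forall i, t i ^+ 2 = t ord0 ^+ 2) -> \sum_i t i = 0 -> forall i, t i = 0.
Proof.
move=> hodd hsq hsum; set tau := t ord0.
have pm i : t i = tau \/ t i = - tau.
  by move/eqP: (hsq i); rewrite eqf_sqr => /orP [/eqP|/eqP]; auto.
have [tau0|tau_neq0] := eqVneq tau 0.
  by move=> i; case: (pm i) => ->; rewrite tau0 ?oppr0.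
(* Adding tau to every term counts the indices with t i = tau twice. *)
have shift : tau *+ m.+1 = \sum_(i | t i == tau) (2 * tau).
  have <- : \sum_i (t i + tau) = tau *+ m.+1.
    by rewrite big_split /= hsum add0r sumr_const card_ord.
  rewrite [RHS]big_mkcond /=; apply: eq_bigr => i _.
  case: (pm i) => ->; first by rewrite eqxx mulr_natl mulr2n.
  case: eqP => [->|_]; last by rewrite addNr.
  by rewrite mulr_natl mulr2n.
rewrite sumr_const in shift; set k := #|_| in shift.
have : (m.+1%:R : R) = (2 * k)%:R.
  by apply: (mulIf tau_neq0); rewrite mulr_natl shift natrM mulr_natl; ring.
move/eqP; rewrite eqr_nat => /eqP hm.
by exfalso; move: hodd; rewrite hm oddM.
Qed.

Lemma equidistant_phases_real n (c s : 'I_n.+1 -> R) : odd n.+1 ->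
  (forall i, c i ^+ 2 + s i ^+ 2 = 1) -> (forall i, 0 < c i) ->
  c ord0 = 1 -> s ord0 = 0 ->
  (forall i, (n.+1%:R * c i - \sum_l c l) ^+ 2 + (n.+1%:R * s i - \sum_l s l) ^+ 2
           = (n.+1%:R * c ord0 - \sum_l c l) ^+ 2
             + (n.+1%:R * s ord0 - \sum_l s l) ^+ 2) ->
  forall i, s i = 0.
Proof.
move=> hodd unit c_gt0 c0 s0 equi.
set X := \sum_l c l in equi *; set Y := \sum_l s l in equi *.
set d := n.+1%:R in equi.
have d_gt0 : 0 < d by rewrite ltr0n.
have X_gt0 : 0 < X.
  rewrite /X (bigD1 ord0) //= c0 ltr_pwDl //.
  by apply: sumr_ge0 => i _; apply: ltW.
have re_const i : c i * X + s i * Y = X.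
  have e := equi i; rewrite c0 s0 in e; have u := unit i.
  have : d * (c i * X + s i * Y - X) = 0.
    have -> : d * (c i * X + s i * Y - X) =
      ((d * 1 - X) ^+ 2 + (d * 0 - Y) ^+ 2 - ((d * c i - X) ^+ 2 + (d * s i - Y) ^+ 2)
       + d ^+ 2 * (c i ^+ 2 + s i ^+ 2 - 1)) / 2 by field.
    by rewrite e u subrr add0r subrr mulr0 mul0r.
  by move/eqP; rewrite mulf_eq0 gt_eqF //= subr_eq0 => /eqP.
(* [t i] is Im (p_i S^* ) for p_i = c i + i s i and S = X + i Y. *)
pose t i := s i * X - c i * Y.
have t_sqr i : t i ^+ 2 = t ord0 ^+ 2.
  have -> : t i ^+ 2 =
      (c i ^+ 2 + s i ^+ 2) * (X ^+ 2 + Y ^+ 2) - (c i * X + s i * Y) ^+ 2.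
    by rewrite /t; ring.
  by rewrite unit re_const /t c0 s0; ring.
have t_sum : \sum_i t i = 0 by rewrite /t sumrB -!mulr_suml -/X -/Y; ring.
have t0 := odd_sum_signs_eq0 hodd t_sqr t_sum.
have Y0 : Y = 0 by have := t0 ord0; rewrite /t c0 s0; lra.
move=> i; have /eqP := t0 i; rewrite /t Y0 mulr0 subr0.
by rewrite mulf_eq0 (gt_eqF X_gt0) orbF => /eqP.
Qed.

Lemma norm_lt1_Rlt t : `|t| < 1 -> Rlt (Ropp R1) t /\ Rlt t R1.
Proof. by rewrite ltr_norml => /andP [/RltP ? /RltP ?]. Qed.

Lemma cos_gt0_norm_lt1 t : `|t| < 1 -> 0 < Rtrigo_def.cos t.
Proof.
move=> /norm_lt1_Rlt [? ?]; apply/RltP.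
have := PI2_1 => ?; apply: cos_gt_0; Lra.lra.
Qed.

Lemma sin_eq0_norm_lt1 t : `|t| < 1 -> Rtrigo_def.sin t = 0 -> t = 0.
Proof.
move=> /norm_lt1_Rlt [? ?] sin0; have {}sin0 : sin t = R0 by [].
have := PI2_1; have := PI2_Rlt_PI => ? ?.
have [t_lt0|t_gt0|//] := ltgtP t 0; exfalso.
  have {}t_lt0 : Rlt t R0 by apply/RltP.
  have : Rlt (sin t) R0 by apply: sin_lt_0_var; Lra.lra.
  Lra.lra.
have {}t_gt0 : Rlt R0 t by apply/RltP.
have : Rlt R0 (sin t) by apply: sin_gt_0; Lra.lra.
Lra.lra.
Qed.

Lemma cos2_add_sin2 t : Rtrigo_def.cos t ^+ 2 + Rtrigo_def.sin t ^+ 2 = 1.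
Proof. by have := sin2_cos2 t; rewrite /Rsqr !RmultE RplusE -!expr2 addrC. Qed.

Lemma sum_complex m (f g : 'I_m -> R) :
  \sum_l (f l +i* g l)%C = ((\sum_l f l) +i* (\sum_l g l))%C.
Proof.
elim: m f g => [|m IH] f g; first by rewrite !big_ord0.
by rewrite !big_ord_recr /= IH.
Qed.

Lemma natr_mul_complex_sub d (c s X Y : R) :
  d%:R * (c +i* s)%C - (X +i* Y)%C = ((d%:R * c - X) +i* (d%:R * s - Y))%C.
Proof.
rewrite -(rmorph_nat (real_complex R)).
by apply/eqP; rewrite eq_complex /=; apply/andP; split; apply/eqP; ring.
Qed.

Lemma exists_small_scaling m (a : 'I_m -> R) :
  exists2 xi : R, 0 < xi & forall i, `|xi * a i| < 1.
Proof.
have sum_ge0 : 0 <= \sum_i `|a i| by apply: sumr_ge0.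
have xi_gt0 : 0 < (1 + \sum_i `|a i|)^-1 by rewrite invr_gt0; lra.
exists (1 + \sum_i `|a i|)^-1 => // i.
rewrite normrM (gtr0_norm xi_gt0) mulrC ltr_pdivrMr ?mul1r; last lra.
have : `|a i| <= \sum_i `|a i| by rewrite (bigD1 i) //= lerDl sumr_ge0.
lra.
Qed.

Lemma column_eq0 n (H : 'M[CC]_n.+1) (Rm : 'M[R]_n.+1) (j j' : 'I_n.+1) :
  odd n.+1 -> is_complex_hadamard H -> j != j' ->
  (forall i k, k != j -> k != j' -> Rm i k = 0) -> Rm ord0 j = 0 ->
  (forall xi, is_complex_hadamard (affine_member H Rm xi)) ->
  forall i, Rm i j = 0.
Proof.
move=> hodd hH njj' Rm_out Rm0j hA.
pose a i := Rm i j.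
have [xi xi_gt0 small] := exists_small_scaling a.
pose c i := Rtrigo_def.cos (xi * a i).
pose s i := Rtrigo_def.sin (xi * a i).
suff s0 : forall i, s i = 0.
  move=> i; have /eqP := sin_eq0_norm_lt1 (small i) (s0 i).
  by rewrite mulf_eq0 (gt_eqF xi_gt0) => /eqP.
have expi0 : expi 0 = 1 by rewrite /expi cos_0 sin_0.
have orth k : k != j -> k != j' ->
    \sum_l H l j * expi (xi * a l) * (H l k)^* = 0.
  move=> nkj nkj'; have [_ ho] := hA xi; rewrite -[RHS](ho j k) 1?eq_sym //.
  by apply: eq_bigr => l _; rewrite !mxE (Rm_out l k) // Rmult_0_r expi0 mulr1.
have equi := phased_column_equidistant hH njj' orth.
have [c0 s0] : c ord0 = 1 /\ s ord0 = 0.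
  by rewrite /c /s /a Rm0j Rmult_0_r; split; [exact: cos_0 | exact: sin_0].
apply: (equidistant_phases_real hodd _ _ c0 s0).
- by move=> i; apply: cos2_add_sin2.
- by move=> i; apply: cos_gt0_norm_lt1.
have sumE : \sum_l expi (xi * a l) = ((\sum_l c l) +i* (\sum_l s l))%C.
  by rewrite -sum_complex.
move=> i; have /(congr1 (fun z => z ^+ 2)) := equi i ord0.
rewrite -!add_Re2_Im2 sumE /expi !natr_mul_complex_sub /=.
exact: complexI.
Qed.

Lemma two_column_support_eq0 n (H : 'M[CC]_n.+1) (Rm : 'M[R]_n.+1) :
  odd n.+1 -> is_complex_hadamard H -> zero_first_row_col Rm ->
  support_in_two_columns Rm ->
  (forall xi, is_complex_hadamard (affine_member H Rm xi)) -> Rm = 0.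
Proof.
move=> hodd hH [Rm0 Rm_0] [j1 [j2 supp]] hA.
have Rm_out i k : k != j1 -> k != j2 -> Rm i k = 0.
  move=> nk1 nk2; case: (eqVneq (Rm i k) 0) => // /supp [ek|ek].
    by rewrite ek eqxx in nk1.
  by rewrite ek eqxx in nk2.
have col0 j j' : j != j' -> (forall i k, k != j -> k != j' -> Rm i k = 0) ->
    forall i, Rm i j = 0.
  by move=> njj' out; apply: (column_eq0 hodd hH njj' out (Rm0 j) hA).
apply/matrixP => i k; rewrite mxE.
have [ej|nj12] := eqVneq j1 j2.
  (* A single column is paired with the first column, which vanishes. *)
  subst j2.
  have [->|nk1] := eqVneq k j1; last by apply: Rm_out.
  have [->|nj0] := eqVneq j1 ord0; first exact: Rm_0.
  by apply: (col0 _ ord0 nj0) => i' k' nk _; apply: Rm_out.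
have [->|nk1] := eqVneq k j1; first by apply: (col0 _ j2 nj12).
have [->|nk2] := eqVneq k j2; last by apply: Rm_out.
by apply: (col0 _ j1); [rewrite eq_sym | move=> i' k' ? ?; apply: Rm_out].
Qed.

Theorem corollary2 (n : nat) (H : 'M[complex R]_n.+1) :
  odd n.+1 ->
  is_complex_hadamard H -> dephased H ->
  ~ exists Rm : 'M[R]_n.+1,
      [/\ Rm != 0, zero_first_row_col Rm,
          support_in_two_columns Rm \/ support_in_two_rows Rm &
          forall xi : R, is_complex_hadamard (affine_member H Rm xi)].
Proof.
move=> hodd hH _ [Rm [Rm_neq0 Rm00 [cols|[i1 [i2 rows]]] hA]].
  by move: Rm_neq0; rewrite (two_column_support_eq0 hodd hH Rm00 cols hA) eqxx.
have [Rm0 Rm_0] := Rm00.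
have RmT0 : Rm^T = 0.
  apply: (two_column_support_eq0 hodd (trmx_hadamard hH)).
  - by split=> k; rewrite mxE; [exact: Rm_0 | exact: Rm0].
  - by exists i1, i2 => i j; rewrite mxE => /rows.
  - by move=> xi; rewrite affine_member_trmx; apply: trmx_hadamard.
by move: Rm_neq0; rewrite -[Rm]trmxK RmT0 trmx0 eqxx.
Qed.
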